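(* Let $A$ be a $p\times p$ positive-semidefinite matrix. Assume $\{\lambda_{\max}(\Sigma_{i,A})\}^2/\mathrm{tr}(\Sigma_{i,A}^2)\to0$ as $p\to\infty$ for $i=1,2$, and $\limsup_{m\to\infty}\{\Delta(A)\}^2/K_1(A)<\infty$. Then $K(A)/K_1(A)=1+o(1)$ as $m\to\infty$.
   Context: Two populations on $\mathbb{R}^p$ have mean vectors $\mu_1,\mu_2$ and positive-definite covariance matrices $\Sigma_1,\Sigma_2$; sample sizes $n_1,n_2\ge4$. $\mu_A=A^{1/2}(\mu_1-\mu_2)$, $\Sigma_{i,A}=A^{1/2}\Sigma_iA^{1/2}$, $\Delta(A)=\|\mu_A\|^2$, $K_1(A)=2\sum_{i=1}^2\mathrm{tr}(\Sigma_{i,A}^2)/\{n_i(n_i-1)\}+4\mathrm{tr}(\Sigma_{1,A}\Sigma_{2,A})/(n_1n_2)$, $K_2(A)=4\sum_{i=1}^2\mu_A^T\Sigma_{i,A}\mu_A/n_i$, $K(A)=K_1(A)+K_2(A)$; $\lambda_{\max}(B)$ is the largest eigenvalue of $B$. Quantities may depend on $p,n_1,n_2$; $m=\min\{p,\min(n_1,n_2)\}$. *)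

From HB Require Import structures.
From mathcomp Require Import all_boot all_order all_algebra.
From mathcomp Require Import all_classical all_reals all_analysis.
Set Implicit Arguments. Unset Strict Implicit. Unset Printing Implicit Defensive.
Import Order.TTheory GRing.Theory Num.Theory.
Local Open Scope ring_scope.
Local Open Scope classical_set_scope.

Definition qform (R : realType) (n : nat) (B : 'M[R]_n) (x : 'cV[R]_n) : R :=
  (x^T *m B *m x) 0 0.

Definition psd (R : realType) (n : nat) (B : 'M[R]_n) : Prop :=
  B^T = B /\ forall x : 'cV[R]_n, 0 <= qform B x.

Definition pd (R : realType) (n : nat) (B : 'M[R]_n) : Prop :=
  B^T = B /\ forall x : 'cV[R]_n, x != 0 -> 0 < qform B x.

Definition is_psd_sqrt (R : realType) (n : nat) (A Ah : 'M[R]_n) : Prop :=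
  psd Ah /\ Ah *m Ah = A.

(* largest eigenvalue (of a real symmetric matrix: sup of its finitely many
   real eigenvalues) *)
Definition lambda_max (R : realType) (n : nat) (B : 'M[R]_n) : R :=
  sup [set a : R | eigenvalue B a].

Definition SigmaA (R : realType) (n : nat) (Ah S : 'M[R]_n) : 'M[R]_n :=
  Ah *m S *m Ah.

Definition muA (R : realType) (n : nat) (Ah : 'M[R]_n) (mu1 mu2 : 'cV[R]_n)
  : 'cV[R]_n := Ah *m (mu1 - mu2).

Definition DeltaA (R : realType) (n : nat) (Ah : 'M[R]_n) (mu1 mu2 : 'cV[R]_n)
  : R := ((muA Ah mu1 mu2)^T *m muA Ah mu1 mu2) 0 0.

Definition K1A (R : realType) (n : nat) (Ah S1 S2 : 'M[R]_n) (n1 n2 : nat) : R :=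
  2 * \tr (SigmaA Ah S1 *m SigmaA Ah S1) / (n1 * (n1 - 1))%:R
  + 2 * \tr (SigmaA Ah S2 *m SigmaA Ah S2) / (n2 * (n2 - 1))%:R
  + 4 * \tr (SigmaA Ah S1 *m SigmaA Ah S2) / (n1 * n2)%:R.

Definition K2A (R : realType) (n : nat) (Ah S1 S2 : 'M[R]_n)
  (mu1 mu2 : 'cV[R]_n) (n1 n2 : nat) : R :=
  4 * (qform (SigmaA Ah S1) (muA Ah mu1 mu2) / n1%:R
       + qform (SigmaA Ah S2) (muA Ah mu1 mu2) / n2%:R).

Definition KA (R : realType) (n : nat) (Ah S1 S2 : 'M[R]_n)
  (mu1 mu2 : 'cV[R]_n) (n1 n2 : nat) : R :=
  K1A Ah S1 S2 n1 n2 + K2A Ah S1 S2 mu1 mu2 n1 n2.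

From HB Require Import structures.
From mathcomp Require Import all_boot all_order all_algebra.
From mathcomp Require Import all_classical all_reals all_analysis.
Import Order.TTheory GRing.Theory Num.Theory.
Import numFieldNormedType.Exports.
Local Open Scope ring_scope.
Local Open Scope classical_set_scope.

From mathcomp Require Import complex spectral sesquilinear.
From mathcomp Require Import ring lra.

(* By the Rayleigh bound, mu_A^T Sigma_{i,A} mu_A <= lambda_max(Sigma_{i,A}) Delta(A),
   so K_2(A) <= 4 Delta(A) (lambda_1 / n_1 + lambda_2 / n_2).  On the other side
   tr(Sigma_{1,A} Sigma_{2,A}) >= 0 (trace of a product of psd matrices) and
   n_i (n_i - 1) <= n_i^2, so K_1(A) >= 2 tr(Sigma_{i,A}^2) / n_i^2 for each i.
   Together: (K_2/K_1)^2 <= 16 (Delta^2/K_1) sum_i lambda_i^2 / tr(Sigma_{i,A}^2),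
   a bounded factor times a null sequence. *)

Section RealSymmetric.
Local Open Scope sesquilinear_scope.
Context {R : realType}.
Local Notation C := R[i].
Local Notation emb := (real_complex R).

Lemma map_mx_real_tr m p (v : 'M[R]_(m, p)) : map_mx emb v^T = (map_mx emb v)^t*.
Proof. by apply/matrixP => i j; rewrite !mxE; symmetry; apply: conjc_real. Qed.

Lemma conjtr_mul m p q (A : 'M[C]_(m, p)) (B : 'M[C]_(p, q)) :
  (A *m B)^t* = B^t* *m A^t*.
Proof. by rewrite trmx_mul map_mxM. Qed.

Lemma real_sym_spectral {n} (S : 'M[R]_n) : S^T = S ->
  exists (P : 'M[C]_n) (d : 'I_n -> R),
   [/\ P *m P^t* = 1%:M, P^t* *m P = 1%:M,
       map_mx emb S = P^t* *m diag_mx (\row_i (d i)%:C)%C *m P &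
       forall i, eigenvalue S (d i)].
Proof.
move=> Ssym; set Sc := map_mx emb S.
have herm : Sc \is hermsymmx.
  apply/is_hermitianmxP; rewrite expr0 scale1r -map_mx_real_tr.
  by rewrite Ssym.
have /orthomx_spectralP Sc_diag := hermitian_normalmx herm.
set P := spectralmx Sc in Sc_diag; set D := spectral_diag Sc in Sc_diag.
have PU : P *m P^t* = 1%:M by apply/unitarymxP; apply: spectral_unitarymx.
have invP : invmx P = P^t* by apply: invmx_unitary; apply: spectral_unitarymx.
have D_real i : (complex.Re (D 0 i))%:C%C = D 0 i.
  by apply: RRe_real; move/mxOverP: (hermitian_spectral_diag_real herm); apply.
exists P, (fun i => complex.Re (D 0 i)); split.
- exact: PU.
- exact: mulmx1C.
- suff -> : \row_i (complex.Re (D 0 i))%:C%C = D by rewrite -invP.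
  by apply/rowP => i; rewrite mxE D_real.
move=> i.
rewrite eigenvalue_root_char -(fmorph_root emb) map_char_poly -eigenvalue_root_char.
suff : eigenvalue Sc (D 0 i) by rewrite -D_real.
apply/eigenvalueP; exists (row i P).
  rewrite -row_mul Sc_diag invP !mulmxA PU mul1mx mul_diag_mx.
  by apply/rowP => j; rewrite !mxE.
apply: contraTneq isT => Pi0.
have := congr1 (fun M : 'M[C]_n => M i i) PU.
rewrite !mxE eqxx big1 => [/esym/eqP|j _]; first by rewrite oner_eq0.
by have := congr1 (fun r : 'rV[C]_n => r 0 j) Pi0; rewrite !mxE => ->; rewrite mul0r.
Qed.

Lemma diag_form_sum n (u e : 'rV[C]_n) :
  (u *m diag_mx e *m u^t*) 0 0 = \sum_j e 0 j * (u 0 j * (u 0 j)^*).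
Proof.
by rewrite mul_mx_diag !mxE; apply: eq_bigr => j _; rewrite !mxE mulrCA mulrA.
Qed.

Lemma conj_form_sum n (u : 'rV[C]_n) :
  (u *m u^t*) 0 0 = \sum_j u 0 j * (u 0 j)^*.
Proof. by rewrite !mxE; apply: eq_bigr => j _; rewrite !mxE. Qed.

Lemma sqr_norm_rV_ge0 {n} (v : 'rV[R]_n) : 0 <= (v *m v^T) 0 0.
Proof. by rewrite mxE; apply: sumr_ge0 => j _; rewrite mxE -expr2 sqr_ge0. Qed.

Lemma sqr_norm_rV_gt0 {n} (v : 'rV[R]_n) : v != 0 -> 0 < (v *m v^T) 0 0.
Proof.
move=> v0; rewrite lt_def sqr_norm_rV_ge0 andbT; apply: contra v0.
rewrite mxE psumr_eq0 => [/allP vv0|j _]; last by rewrite mxE -expr2 sqr_ge0.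
apply/eqP/rowP => j; have := vv0 j (mem_index_enum j).
by rewrite !mxE -expr2 sqrf_eq0 => /eqP.
Qed.

Lemma eigenvalue_form {n} (S : 'M[R]_n) a : eigenvalue S a ->
  exists2 v : 'rV[R]_n, v != 0 & (v *m S *m v^T) 0 0 = a * (v *m v^T) 0 0.
Proof.
by move=> /eigenvalueP [v Sv v0]; exists v => //; rewrite Sv -scalemxAl mxE.
Qed.

Lemma spectral_form_le {n} (S : 'M[R]_n) (P : 'M[C]_n) (d : 'I_n -> R) (l : R) :
  P^t* *m P = 1%:M ->
  map_mx emb S = P^t* *m diag_mx (\row_i (d i)%:C)%C *m P ->
  (forall i, d i <= l) ->
  forall v : 'rV[R]_n, (v *m S *m v^T) 0 0 <= l * (v *m v^T) 0 0.
Proof.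
move=> PU S_diag d_le v; set vc := map_mx emb v.
suff : (vc *m map_mx emb S *m vc^t*) 0 0 <= l%:C%C * (vc *m vc^t*) 0 0.
  by rewrite -!map_mx_real_tr -!map_mxM !mxE -rmorphM lecR.
set w := vc *m P^t*.
have wt : w^t* = P *m vc^t* by rewrite conjtr_mul trmxCK.
have -> : vc *m vc^t* = w *m w^t* by rewrite wt !mulmxA -(mulmxA vc) PU mulmx1.
rewrite S_diag.
have -> : vc *m (P^t* *m diag_mx (\row_i (d i)%:C)%C *m P) *m vc^t*
          = w *m diag_mx (\row_i (d i)%:C)%C *m w^t* by rewrite wt !mulmxA.
rewrite diag_form_sum conj_form_sum mulr_sumr; apply: ler_sum => j _.
by rewrite mxE ler_wpM2r ?mul_conjC_ge0 // lecR.
Qed.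

Lemma qform_le_lambda_max {n} (S : 'M[R]_n) (x : 'cV[R]_n) : S^T = S -> (0 < n)%N ->
  qform S x <= lambda_max S * (x^T *m x) 0 0.
Proof.
move=> Ssym n_gt0.
have [P [d [_ PU S_diag eig_d]]] := real_sym_spectral _ Ssym.
have [j _ d_max] := @arg_maxP _ R _ (Ordinal n_gt0) xpredT d erefl.
have form_le := spectral_form_le _ _ _ _ PU S_diag (fun i => d_max i erefl).
suff -> : lambda_max S = d j by have := form_le x^T; rewrite trmxK.
have ub : ubound [set a | eigenvalue S a] (d j).
  move=> a /eigenvalue_form [v v0 Sva].
  by have := form_le v; rewrite Sva ler_pM2r // sqr_norm_rV_gt0.
apply/eqP; rewrite eq_le; apply/andP; split.
  by apply: ge_sup => //; exists (d j); apply: eig_d.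
apply: sup_upper_bound; last exact: eig_d.
by split; [exists (d j); apply: eig_d | exists (d j)].
Qed.

Lemma psd_eigenvalue_ge0 {n} (S : 'M[R]_n) a : psd S -> eigenvalue S a -> 0 <= a.
Proof.
move=> [_ S_ge0] /eigenvalue_form [v v0 Sva].
by have := S_ge0 v^T; rewrite /qform trmxK Sva pmulr_lge0 // sqr_norm_rV_gt0.
Qed.

(* tr(S1 S2) = sum_i d_i sum_j e_j |M_ij|^2 with M = P Q^* built from both
   spectral decompositions. *)
Lemma psd_mxtrace_mul_ge0 {n} (S1 S2 : 'M[R]_n) : psd S1 -> psd S2 -> 0 <= \tr (S1 *m S2).
Proof.
move=> S1_psd S2_psd.
have [P [d [_ _ S1_diag eig_d]]] := real_sym_spectral _ S1_psd.1.
have [Q [e [_ _ S2_diag eig_e]]] := real_sym_spectral _ S2_psd.1.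
rewrite -ler0c -[_%:C%C]/(emb _) -trace_map_mx map_mxM S1_diag S2_diag.
rewrite -!mulmxA mxtrace_mulC -!mulmxA.
set M := P *m Q^t*.
have -> : P *m (Q^t* *m (diag_mx (\row_i (e i)%:C%C) *m (Q *m P^t*)))
          = M *m diag_mx (\row_i (e i)%:C%C) *m M^t*.
  by rewrite conjtr_mul trmxCK !mulmxA.
rewrite mul_diag_mx /mxtrace; apply: sumr_ge0 => i _.
rewrite !mxE mulr_ge0 ?ler0c ?(psd_eigenvalue_ge0 _ _ S1_psd) //.
rewrite mul_mx_diag; apply: sumr_ge0 => j _; rewrite !mxE mulrAC.
by rewrite mulr_ge0 ?mul_conjC_ge0 ?ler0c ?(psd_eigenvalue_ge0 _ _ S2_psd).
Qed.

End RealSymmetric.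

Section RatioBounds.
Context {R : realFieldType}.

Lemma div_sqr_le_div_mul_subr1 (t N : R) : 0 <= t -> 1 < N -> t / N ^+ 2 <= t / (N * (N - 1)).
Proof.
move=> t_ge0 N_gt1; have N_gt0 : 0 < N by lra.
by rewrite ler_wpM2l // lef_pV2 ?posrE ?exprn_gt0 ?mulr_gt0 ?subr_gt0 //; nra.
Qed.

Lemma sqr_div_le (q l t N D b c : R) : 0 <= q -> q <= l * D -> 0 < t -> 0 < N ->
  t / N ^+ 2 <= b -> D ^+ 2 <= c -> (q / N) ^+ 2 <= l ^+ 2 / t * (b * c).
Proof.
move=> q_ge0 q_le t_gt0 N_gt0 tb Dc.
have lDN : (l * D / N) ^+ 2 = l ^+ 2 / t * (t / N ^+ 2) * D ^+ 2.
  by field; rewrite !gt_eqF.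
have qN_le : q / N <= l * D / N by rewrite ler_pM2r ?invr_gt0.
have qN_ge0 : 0 <= q / N by rewrite divr_ge0 // ltW.
apply: (le_trans (y := (l * D / N) ^+ 2)); first by nra.
rewrite lDN -mulrA; apply: ler_wpM2l; first exact: divr_ge0 (sqr_ge0 l) (ltW t_gt0).
exact: ler_pM (divr_ge0 (ltW t_gt0) (sqr_ge0 N)) (sqr_ge0 D) tb Dc.
Qed.

Lemma sum_ratio_sqr_le (x1 x2 r1 r2 K C : R) : 0 < K ->
  x1 ^+ 2 <= r1 * (K / 2 * (C * K)) -> x2 ^+ 2 <= r2 * (K / 2 * (C * K)) ->
  (4 * (x1 + x2) / K) ^+ 2 <= 16 * C * (r1 + r2).
Proof.
move=> K_gt0 x1_le x2_le; rewrite expr_div_n ler_pdivrMr ?exprn_gt0 //.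
have : (4 * (x1 + x2)) ^+ 2 <= 32 * (x1 ^+ 2 + x2 ^+ 2).
  by have := sqr_ge0 (x1 - x2); nra.
by nra.
Qed.

End RatioBounds.

Section TestStatistic.
Context {R : realType}.

Lemma pd_psd {n} (S : 'M[R]_n) : pd S -> psd S.
Proof.
move=> [S_sym S_gt0]; split=> // x.
by have [->|/S_gt0/ltW//] := eqVneq x 0; rewrite /qform mulmx0 mxE.
Qed.

Lemma SigmaA_psd {n} (Ah S : 'M[R]_n) : Ah^T = Ah -> psd S -> psd (SigmaA Ah S).
Proof.
move=> Ah_sym [S_sym S_ge0]; split; first by rewrite /SigmaA !trmx_mul Ah_sym S_sym mulmxA.
by move=> x; have := S_ge0 (Ah *m x); rewrite /qform /SigmaA trmx_mul Ah_sym !mulmxA.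
Qed.

Lemma mxtrace_gt0_dim {n} (M : 'M[R]_n) : 0 < \tr M -> (0 < n)%N.
Proof. by case: n M => [|m] M //; rewrite /mxtrace big_ord0 ltxx. Qed.

Lemma K1AE {n} (Ah S1 S2 : 'M[R]_n) (n1 n2 : nat) : (0 < n1)%N -> (0 < n2)%N ->
  K1A Ah S1 S2 n1 n2 =
    2 * (\tr (SigmaA Ah S1 *m SigmaA Ah S1) / (n1%:R * (n1%:R - 1)))
  + 2 * (\tr (SigmaA Ah S2 *m SigmaA Ah S2) / (n2%:R * (n2%:R - 1)))
  + 4 * (\tr (SigmaA Ah S1 *m SigmaA Ah S2) / (n1%:R * n2%:R)).
Proof. by move=> n1_gt0 n2_gt0; rewrite /K1A !natrM !natrB // !mulrA. Qed.

(* n (n - 1) <= n^2, and the cross term tr(Sigma_{1,A} Sigma_{2,A}) is nonnegative. *)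
Lemma mxtrace_SigmaA_sqr_le_K1A {n} (Ah S1 S2 : 'M[R]_n) (n1 n2 : nat) :
  Ah^T = Ah -> psd S1 -> psd S2 -> (1 < n1)%N -> (1 < n2)%N ->
  \tr (SigmaA Ah S1 *m SigmaA Ah S1) / n1%:R ^+ 2 <= K1A Ah S1 S2 n1 n2 / 2 /\
  \tr (SigmaA Ah S2 *m SigmaA Ah S2) / n2%:R ^+ 2 <= K1A Ah S1 S2 n1 n2 / 2.
Proof.
move=> Ah_sym S1_psd S2_psd n1_gt1 n2_gt1.
have P1_psd := SigmaA_psd _ _ Ah_sym S1_psd; have P2_psd := SigmaA_psd _ _ Ah_sym S2_psd.
have t1_ge0 := psd_mxtrace_mul_ge0 _ _ P1_psd P1_psd.
have t2_ge0 := psd_mxtrace_mul_ge0 _ _ P2_psd P2_psd.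
have t12_ge0 := psd_mxtrace_mul_ge0 _ _ P1_psd P2_psd.
have N1_gt1 : 1 < n1%:R :> R by rewrite ltr1n.
have N2_gt1 : 1 < n2%:R :> R by rewrite ltr1n.
have := div_sqr_le_div_mul_subr1 _ _ t1_ge0 N1_gt1.
have := div_sqr_le_div_mul_subr1 _ _ t2_ge0 N2_gt1.
have := divr_ge0 t1_ge0 (sqr_ge0 (n1%:R : R)); have := divr_ge0 t2_ge0 (sqr_ge0 (n2%:R : R)).
have : 0 <= \tr (SigmaA Ah S1 *m SigmaA Ah S2) / (n1%:R * n2%:R).
  by rewrite divr_ge0 ?mulr_ge0 ?ler0n.
rewrite K1AE; [split; lra | exact: ltnW n1_gt1 | exact: ltnW n2_gt1].
Qed.

Lemma K2A_div_K1A_bound {n} (Ah S1 S2 : 'M[R]_n) (mu1 mu2 : 'cV[R]_n) (n1 n2 : nat) (C : R) :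
  Ah^T = Ah -> psd S1 -> psd S2 -> (1 < n1)%N -> (1 < n2)%N ->
  0 < \tr (SigmaA Ah S1 *m SigmaA Ah S1) -> 0 < \tr (SigmaA Ah S2 *m SigmaA Ah S2) ->
  DeltaA Ah mu1 mu2 ^+ 2 / K1A Ah S1 S2 n1 n2 <= C ->
  [/\ 0 < K1A Ah S1 S2 n1 n2, 0 <= K2A Ah S1 S2 mu1 mu2 n1 n2 / K1A Ah S1 S2 n1 n2 &
      (K2A Ah S1 S2 mu1 mu2 n1 n2 / K1A Ah S1 S2 n1 n2) ^+ 2 <=
        16 * C * (lambda_max (SigmaA Ah S1) ^+ 2 / \tr (SigmaA Ah S1 *m SigmaA Ah S1)
                + lambda_max (SigmaA Ah S2) ^+ 2 / \tr (SigmaA Ah S2 *m SigmaA Ah S2))].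
Proof.
move=> Ah_sym S1_psd S2_psd n1_gt1 n2_gt1 t1_gt0 t2_gt0 DC.
have [t1_le t2_le] := mxtrace_SigmaA_sqr_le_K1A _ _ _ _ _ Ah_sym S1_psd S2_psd n1_gt1 n2_gt1.
have [P1_sym P1_ge0] := SigmaA_psd _ _ Ah_sym S1_psd.
have [P2_sym P2_ge0] := SigmaA_psd _ _ Ah_sym S2_psd.
have n_gt0 := mxtrace_gt0_dim _ t1_gt0.
have N1_gt0 : 0 < n1%:R :> R by rewrite ltr0n ltnW.
have N2_gt0 : 0 < n2%:R :> R by rewrite ltr0n ltnW.
have K1_gt0 : 0 < K1A Ah S1 S2 n1 n2.
  by have := divr_gt0 t1_gt0 (exprn_gt0 2 N1_gt0); lra.
have D_le : DeltaA Ah mu1 mu2 ^+ 2 <= C * K1A Ah S1 S2 n1 n2 by rewrite -ler_pdivrMr.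
have q1_ge0 := P1_ge0 (muA Ah mu1 mu2); have q2_ge0 := P2_ge0 (muA Ah mu1 mu2).
split => //.
  by apply: divr_ge0 (ltW K1_gt0); rewrite mulr_ge0 ?addr_ge0 ?divr_ge0 ?ler0n.
apply: sum_ratio_sqr_le => //; apply: (sqr_div_le _ _ _ _ (DeltaA Ah mu1 mu2)) => //;
  exact: qform_le_lambda_max.
Qed.

End TestStatistic.

Lemma sqr_le_cvg0 {R : realType} (f g : nat -> R) :
  (\forall k \near \oo, 0 <= f k /\ f k ^+ 2 <= g k) ->
  g @ \oo --> 0 -> f @ \oo --> 0.
Proof.
move=> fg /cvgrPdist_lt g0; apply/cvgrPdist_lt => e e_gt0.
apply: filterS2 fg (g0 _ (exprn_gt0 2 e_gt0)) => k [f_ge0 fk_le].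
rewrite !sub0r !normrN (ger0_norm f_ge0) => g_lt.
have := le_lt_trans (ler_norm (g k)) g_lt; nra.
Qed.

Theorem lemma1 (R : realType) (p n1 n2 : nat -> nat)
  (mu1 mu2 : forall k, 'cV[R]_(p k))
  (Sigma1 Sigma2 A Ah : forall k, 'M[R]_(p k)) :
  (forall k, pd (Sigma1 k) /\ pd (Sigma2 k)) ->
  (forall k, (4 <= n1 k)%N /\ (4 <= n2 k)%N) ->
  (forall N : nat, \forall k \near \oo, (N <= minn (p k) (minn (n1 k) (n2 k)))%N) ->
  (forall k, psd (A k)) ->
  (forall k, is_psd_sqrt (A k) (Ah k)) ->
  (* the ratios below are well defined (tr(Sigma_{i,A}^2) > 0) eventually *)
  (\forall k \near \oo,
     0 < \tr (SigmaA (Ah k) (Sigma1 k) *m SigmaA (Ah k) (Sigma1 k)) /\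
     0 < \tr (SigmaA (Ah k) (Sigma2 k) *m SigmaA (Ah k) (Sigma2 k))) ->
  ((fun k : nat => lambda_max (SigmaA (Ah k) (Sigma1 k)) ^+ 2
            / \tr (SigmaA (Ah k) (Sigma1 k) *m SigmaA (Ah k) (Sigma1 k)))
    @ \oo --> (0 : R)) ->
  ((fun k : nat => lambda_max (SigmaA (Ah k) (Sigma2 k)) ^+ 2
            / \tr (SigmaA (Ah k) (Sigma2 k) *m SigmaA (Ah k) (Sigma2 k)))
    @ \oo --> (0 : R)) ->
  (exists C : R, \forall k \near \oo,
     DeltaA (Ah k) (mu1 k) (mu2 k) ^+ 2
     / K1A (Ah k) (Sigma1 k) (Sigma2 k) (n1 k) (n2 k) <= C) ->
  ((fun k : nat => KA (Ah k) (Sigma1 k) (Sigma2 k) (mu1 k) (mu2 k) (n1 k) (n2 k)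
            / K1A (Ah k) (Sigma1 k) (Sigma2 k) (n1 k) (n2 k))
    @ \oo --> (1 : R)).
Proof.
move=> Sigma_pd n_ge4 _ _ Ah_sqrt tr_gt0 r1_cvg0 r2_cvg0 [C DC].
set r1 := fun k => lambda_max _ ^+ 2 / _ in r1_cvg0.
set r2 := fun k => lambda_max _ ^+ 2 / _ in r2_cvg0.
set f := fun k => K2A (Ah k) (Sigma1 k) (Sigma2 k) (mu1 k) (mu2 k) (n1 k) (n2 k)
                  / K1A (Ah k) (Sigma1 k) (Sigma2 k) (n1 k) (n2 k).
have f_near : \forall k \near \oo,
    [/\ 0 < K1A (Ah k) (Sigma1 k) (Sigma2 k) (n1 k) (n2 k), 0 <= f k &
         f k ^+ 2 <= 16 * C * (r1 k + r2 k)].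
  apply: filterS2 tr_gt0 DC => k [t1_gt0 t2_gt0].
  apply: K2A_div_K1A_bound t1_gt0 t2_gt0.
  - exact: (Ah_sqrt k).1.1.
  - exact: pd_psd (Sigma_pd k).1.
  - exact: pd_psd (Sigma_pd k).2.
  - exact: leq_trans (n_ge4 k).1.
  - exact: leq_trans (n_ge4 k).2.
have f_cvg0 : f @ \oo --> 0.
  apply: (sqr_le_cvg0 _ (fun k => 16 * C * (r1 k + r2 k))).
    by apply: filterS f_near => k [].
  rewrite -[X in _ --> X](mulr0 (16 * C)) -[X in 16 * C * X](addr0 0).
  exact: cvgM (cvg_cst _) (cvgD r1_cvg0 r2_cvg0).
have one_add_f_cvg : (fun k => 1 + f k) @ \oo --> (1 : R).
  by rewrite -[X in _ --> X](addr0 1); apply: cvgD f_cvg0; exact: cvg_cst.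
apply: cvg_trans one_add_f_cvg; apply: near_eq_cvg.
by apply: filterS f_near => k [K1_gt0 _ _]; rewrite /KA mulrDl divff ?gt_eqF.
Qed.
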